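(* Let $R$ be an atomic, integrally closed integral domain satisfying condition (C): whenever $I=(a_0,a_1)$ is a primitive ideal of $R$ generated by two elements, there exists an irreducible element $\alpha\in R$ with $\alpha\in I_v$. Then $R$ is a half-factorial domain if and only if $R$ has the Z-property.
   Context: Let $K$ be the quotient field of $R$. For a fractional ideal $I$, $I^{-1}=\{t\in K : tI\subseteq R\}$ and $I_v=(I^{-1})^{-1}$. A polynomial $f\in R[x]$ is primitive if its coefficients have no common nonunit divisor in $R$; a primitive ideal is an ideal $I\subseteq R$ equal to the ideal generated by the coefficients of some primitive polynomial $f\in R[x]$. A half-factorial domain is an atomic domain in which any two factorizations of a nonzero nonunit into irreducible elements have the same length. For $a,b\in R$, $[a,b]\neq 1$ means $a$ and $b$ have a common nonunit divisor, and $[a,b]=1$ means they do not. $R$ has the Z-property if whenever $a,b,c,d,e$ are nonzero nonunits of $R$ with $abc=de$, then $[ab,d]\neq 1$ or $[ab,e]\neq 1$. *)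

From HB Require Import structures.
From mathcomp Require Import all_boot all_order all_algebra.
From mathcomp Require Import fraction.
Set Implicit Arguments. Unset Strict Implicit. Unset Printing Implicit Defensive.
Import Order.TTheory GRing.Theory Num.Theory.
Local Open Scope ring_scope.

Section Defs.
Variable R : idomainType.

Definition K := {fraction R}.
Definition toK (x : R) : K := @FracField.tofrac R x.
Definition inR (t : K) : Prop := exists r : R, t = toK r.

Definition dvdR (a b : R) : Prop := exists c : R, b = c * a.

(* [a,b] <> 1 : a and b have a common nonunit divisor *)
Definition has_common_nonunit (a b : R) : Prop :=
  exists z : R, z \isn't a GRing.unit /\ dvdR z a /\ dvdR z b.

Definition irreducible_elt (a : R) : Prop :=
  a != 0 /\ a \isn't a GRing.unit /\
  forall b c : R, a = b * c -> b \is a GRing.unit \/ c \is a GRing.unit.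

Definition factorization (x : R) (s : seq R) : Prop :=
  (forall y, y \in s -> irreducible_elt y) /\ \prod_(y <- s) y = x.

Definition atomic : Prop :=
  forall x : R, x != 0 -> x \isn't a GRing.unit -> exists s, factorization x s.

Definition half_factorial : Prop :=
  atomic /\
  forall x : R, x != 0 -> x \isn't a GRing.unit ->
    forall s t, factorization x s -> factorization x t -> size s = size t.

Definition integrally_closed : Prop :=
  forall t : K, (exists p : {poly R}, p \is monic /\ root (map_poly toK p) t) -> inR t.

Definition in_ideal_gen (s : seq R) (x : R) : Prop :=
  exists r : nat -> R, x = \sum_(i < size s) r i * s`_i.

Definition primitive_poly (f : {poly R}) : Prop :=
  forall d : R, (forall i, dvdR d f`_i) -> d \is a GRing.unit.

Definition primitive_ideal (I : R -> Prop) : Prop :=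
  exists f : {poly R}, primitive_poly f /\
    forall x, I x <-> in_ideal_gen (polyseq f) x.

Definition ideal_inv (I : R -> Prop) (t : K) : Prop :=
  forall a, I a -> inR (t * toK a).

Definition ideal_v (I : R -> Prop) (u : K) : Prop :=
  forall t, ideal_inv I t -> inR (u * t).

Definition condition_C : Prop :=
  forall a0 a1 : R, primitive_ideal (in_ideal_gen [:: a0; a1]) ->
    exists alpha : R, irreducible_elt alpha /\
      ideal_v (in_ideal_gen [:: a0; a1]) (toK alpha).

Definition nonzero_nonunit (x : R) : Prop := x != 0 /\ x \isn't a GRing.unit.

Definition Z_property : Prop :=
  forall a b c d e : R,
    nonzero_nonunit a -> nonzero_nonunit b -> nonzero_nonunit c ->
    nonzero_nonunit d -> nonzero_nonunit e ->
    a * b * c = d * e ->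
    has_common_nonunit (a * b) d \/ has_common_nonunit (a * b) e.

End Defs.

(* Z-property implies half-factoriality: argue by induction on the shorter side of an equality
   p1 ... pm = u q1 ... qn of products of irreducibles (u a unit) with m > n.  The Z-property,
   applied to (p1)(p2)(p3 ... pm) = (u q1)(q2 ... qn), gives an irreducible dividing p1 p2 and a
   proper subproduct of the q's; cancelling it leaves a strictly shorter equality in which the
   p-side is still at least as long, contradicting the induction hypothesis.
   Conversely, if a b c = d e with a b coprime to d and to e, condition (C) applied to (d, a b)
   and then to (e, a b) produces a b w = beta alpha with alpha, beta irreducible and w a nonzero
   nonunit: factorizations of lengths at least 3 and 2 of the same element. *)

From mathcomp Require Import all_boot all_algebra.
From mathcomp Require Import fraction ring zify.
From Stdlib Require Import Classical.
Import GRing.Theory.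
Set Implicit Arguments.
Unset Strict Implicit.
Local Open Scope ring_scope.

Section Irreducibles.
Variable R : idomainType.
Implicit Types a b p u x y : R.

Definition irreducible_seq (s : seq R) : Prop := {in s, forall y, irreducible_elt y}.

Lemma unit_neq0 u : u \is a GRing.unit -> u != 0.
Proof. by move=> Hu; apply: contraTneq Hu => ->; rewrite unitr0. Qed.

Lemma irreducible_neq0 a : irreducible_elt a -> a != 0.
Proof. by case. Qed.

Lemma irreducible_nonunit a : irreducible_elt a -> a \isn't a GRing.unit.
Proof. by case=> _ []. Qed.

Lemma irreducible_unitMl u a :
  u \is a GRing.unit -> irreducible_elt a -> irreducible_elt (u * a).
Proof.
move=> Hu [a0 [au Ha]]; split; first exact: mulf_neq0 (unit_neq0 Hu) a0.
split; first by rewrite unitrM Hu.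
move=> b c Ebc; have Ea : a = (u^-1 * b) * c by rewrite -mulrA -Ebc mulKr.
by case: (Ha _ _ Ea) => H; [left; rewrite -(mulVKr Hu b) unitrM Hu | right].
Qed.

Lemma mul_nonunit_not_irreducible a b :
  a \isn't a GRing.unit -> b \isn't a GRing.unit -> ~ irreducible_elt (a * b).
Proof. by move=> /negbTE au /negbTE bu [_ [_ /(_ a b erefl)]]; rewrite au bu; case. Qed.

Lemma irreducible_dvd_common p a :
  irreducible_elt a -> has_common_nonunit p a -> dvdR a p.
Proof.
move=> [_ [_ Ha]] [z [zu [[y ->] [k Ek]]]].
have ku : k \is a GRing.unit by case: (Ha _ _ Ek) => // zu'; rewrite zu' in zu.
by exists (y * k^-1); rewrite Ek mulrA mulrVK.
Qed.

Lemma irreducible_seq_cons y s :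
  irreducible_seq (y :: s) <-> irreducible_elt y /\ irreducible_seq s.
Proof.
split=> [Hs | [Hy Hs] x]; last by rewrite inE => /predU1P [->|/Hs].
by split=> [|x Hx]; apply: Hs; rewrite inE ?eqxx ?Hx ?orbT.
Qed.

Lemma irreducible_seq_cat s t :
  irreducible_seq (s ++ t) <-> irreducible_seq s /\ irreducible_seq t.
Proof.
split=> [Hst | [Hs Ht] y]; last by rewrite mem_cat => /orP [/Hs|/Ht].
by split=> y Hy; apply: Hst; rewrite mem_cat Hy ?orbT.
Qed.

Lemma irreducible_seq_perm s t :
  perm_eq s t -> irreducible_seq s -> irreducible_seq t.
Proof. by move=> Est Hs y; rewrite -(perm_mem Est) => /Hs. Qed.

Lemma prod_irreducible_neq0 s : irreducible_seq s -> \prod_(y <- s) y != 0.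
Proof.
move=> Hs; rewrite prodf_seq_neq0; apply/allP => y /Hs.
exact: irreducible_neq0.
Qed.

Lemma prod_irreducible_unit s :
  irreducible_seq s -> \prod_(y <- s) y \is a GRing.unit -> s = [::].
Proof.
case: s => [//|y s] /irreducible_seq_cons [Hy _].
by rewrite big_cons unitrM (negbTE (irreducible_nonunit Hy)).
Qed.

Lemma factorization_nonunit x :
  atomic R -> x != 0 -> x \isn't a GRing.unit ->
  exists s, factorization x s /\ (0 < size s)%N.
Proof.
move=> Hat x0 xu; have [[|y s] [Hs Ex]] := Hat x x0 xu.
  by move: xu; rewrite -Ex big_nil unitr1.
by exists (y :: s).
Qed.

Lemma common_irreducible_divisor x y :
  atomic R -> has_common_nonunit x y ->
  y != 0 -> exists2 q, irreducible_elt q & dvdR q x /\ dvdR q y.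
Proof.
move=> Hat [z [zu [[a Ea] [b Eb]]]] y0.
have z0 : z != 0 by apply: contraNneq y0; rewrite Eb => ->; rewrite mulr0.
case: (factorization_nonunit Hat z0 zu) => [[|q s] [[Hs Ez] _]] //.
have [Hq _] := iffLR (irreducible_seq_cons q s) Hs.
rewrite big_cons in Ez.
exists q => //; split.
  by exists (a * \prod_(y <- s) y); rewrite Ea -Ez; ring.
by exists (b * \prod_(y <- s) y); rewrite Eb -Ez; ring.
Qed.

End Irreducibles.

Section ConditionC.
Variable R : idomainType.
Implicit Types c d e p : R.

Lemma coprime_primitive_ideal d p :
  p != 0 -> ~ has_common_nonunit p d -> primitive_ideal (in_ideal_gen [:: d; p]).
Proof.
move=> p0 Hpd; have Hs : polyseq (Poly [:: d; p]) = [:: d; p] by rewrite (@PolyK _ 0).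
exists (Poly [:: d; p]); split; last by move=> x; rewrite Hs.
move=> z Hz; apply/negPn/negP => zu; apply: Hpd.
by exists z; split; [|split; [have := Hz 1%N | have := Hz 0%N]; rewrite Hs].
Qed.

(* If [p * c = d * e] with [p] and [d] coprime, then [e / p] lies in [(d, p)^-1]; condition (C)
   supplies an irreducible [alpha] in [(d, p)_v], so that [alpha * e / p] is in [R]. *)
Lemma condition_C_cofactor c d e p :
  condition_C R -> p != 0 -> p * c = d * e -> ~ has_common_nonunit p d ->
  exists alpha w, irreducible_elt alpha /\ alpha * e = w * p.
Proof.
move=> HC p0 Epc Hpd.
have [alpha [Halpha Hv]] := HC d p (coprime_primitive_ideal p0 Hpd).
have pK0 : toK p != 0 by rewrite /toK tofrac_eq0.
have Hinv : ideal_inv (in_ideal_gen [:: d; p]) (toK e / toK p).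
  move=> x [r ->]; rewrite big_ord_recl big_ord1 /=.
  exists (r 0%N * c + r 1%N * e).
  have Ec : toK c = toK (d * e) / toK p by rewrite -Epc /toK rmorphM /= mulrC mulKf.
  by rewrite /toK !rmorphD !rmorphM /= -!/(toK _) Ec; field.
have [w Ew] := Hv _ Hinv; exists alpha, w; split => //.
apply/eqP; rewrite -tofrac_eq !rmorphM /= -!/(toK _) -Ew.
by rewrite mulrA divfK.
Qed.

End ConditionC.

Section HalfFactorialZ.
Variable R : idomainType.
Hypothesis HC : condition_C R.
Hypothesis Hhf : half_factorial R.

Lemma half_factorial_mul3_neq_mul2 (a b c alpha beta : R) :
  nonzero_nonunit a -> nonzero_nonunit b -> nonzero_nonunit c ->
  irreducible_elt alpha -> irreducible_elt beta -> a * b * c != alpha * beta.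
Proof.
have [Hat Hlen] := Hhf.
move=> [a0 au] [b0 bu] [c0 cu] Halpha Hbeta; apply/eqP => E.
have [sa [[Hsa Ea] Sa]] := factorization_nonunit Hat a0 au.
have [sb [[Hsb Eb] Sb]] := factorization_nonunit Hat b0 bu.
have [sc [[Hsc Ec] Sc]] := factorization_nonunit Hat c0 cu.
have x0 : a * b * c != 0 by rewrite !mulf_neq0.
have xu : a * b * c \isn't a GRing.unit by rewrite !unitrM (negbTE au).
have Hs : factorization (a * b * c) (sa ++ sb ++ sc).
  split; first by apply/irreducible_seq_cat; split; last apply/irreducible_seq_cat.
  by rewrite !big_cat /= Ea Eb Ec mulrA.
have Ht : factorization (a * b * c) [:: alpha; beta].
  split; first by move=> y; rewrite !inE => /orP [] /eqP ->.
  by rewrite E !big_cons big_nil mulr1.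
by move: (Hlen _ x0 xu _ _ Hs Ht); rewrite !size_cat /=; lia.
Qed.

(* The first use of condition (C) yields [alpha] coprime to [a b]; this is what makes the
   cofactor [w'] of the second use a nonunit. *)
Lemma half_factorial_Z_property : Z_property R.
Proof.
move=> a b c d e Ha Hb _ _ _ Eabc.
have [Hd' | Hpd] := classic (has_common_nonunit (a * b) d); first by left.
have [He' | Hpe] := classic (has_common_nonunit (a * b) e); first by right.
exfalso; have [a0 au] := Ha; have [b0 bu] := Hb.
have p0 : a * b != 0 by rewrite mulf_neq0.
have [alpha [w [Halpha Ew]]] := condition_C_cofactor HC p0 Eabc Hpd.
have alpha0 := irreducible_neq0 Halpha.
have Hpalpha : ~ has_common_nonunit (a * b) alpha.
  move=> /(irreducible_dvd_common Halpha) [g Eg]; apply: Hpe; exists g.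
  split; last split.
  - apply/negP => gu; apply: (mul_nonunit_not_irreducible au bu).
    by rewrite Eg; apply: irreducible_unitMl.
  - by exists alpha; rewrite Eg mulrC.
  - exists w; apply: (mulIf alpha0).
    by rewrite mulrC Ew Eg mulrA.
have Ew2 : a * b * w = e * alpha by rewrite mulrC -Ew mulrC.
have [beta [w' [Hbeta Ew']]] := condition_C_cofactor HC p0 Ew2 Hpe.
have w'0 : w' != 0.
  apply: contraTneq (mulf_neq0 (irreducible_neq0 Hbeta) alpha0) => w'0.
  by rewrite Ew' w'0 mul0r eqxx.
have [w'u | w'u] := boolP (w' \is a GRing.unit).
  apply: Hpalpha; exists alpha; split; first exact: irreducible_nonunit.
  split; last by exists 1; rewrite mul1r.
  by exists (w'^-1 * beta); rewrite -mulrA Ew' mulKr.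
have := half_factorial_mul3_neq_mul2 Ha Hb (conj w'0 w'u) Hbeta Halpha.
by rewrite Ew' mulrC eqxx.
Qed.

End HalfFactorialZ.

Section ZPropertyHalfFactorial.
Variable R : idomainType.
Hypothesis Hat : atomic R.
Hypothesis HZ : Z_property R.

Lemma Z_property_split (a b c q : R) (t : seq R) :
  nonzero_nonunit a -> nonzero_nonunit b -> nonzero_nonunit c ->
  irreducible_elt q -> irreducible_seq t -> t != [::] ->
  a * b * c = q * \prod_(y <- t) y ->
  exists t1 t2, [/\ perm_eq (q :: t) (t1 ++ t2), (size t1 <= size t)%N &
                    has_common_nonunit (a * b) (\prod_(y <- t1) y)].
Proof.
move=> Ha Hb Hc [q0 [qu _]] Ht tn0 E.
have Htu : \prod_(y <- t) y \isn't a GRing.unit.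
  by apply: contra tn0 => /(prod_irreducible_unit Ht) ->.
have Sq : (0 < size t)%N by case: (t) tn0.
have [Hq_common | Ht_common] := HZ Ha Hb Hc (conj q0 qu) (conj (prod_irreducible_neq0 Ht) Htu) E.
  by exists [:: q], t; rewrite big_seq1 Sq.
exists t, [:: q]; split => //.
by rewrite perm_sym perm_catC.
Qed.

Section SizeBound.
Variable n : nat.
Hypothesis IH : forall (s t : seq R) (u : R),
  irreducible_seq s -> irreducible_seq t -> u \is a GRing.unit ->
  \prod_(y <- s) y = u * \prod_(y <- t) y -> (size t < n)%N -> (size s <= size t)%N.

Lemma divide_out_irreducible (t : seq R) (k q : R) :
  irreducible_seq t -> (size t < n)%N -> irreducible_elt q ->
  \prod_(y <- t) y = k * q ->
  exists w sk, [/\ w \is a GRing.unit, irreducible_seq sk,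
                   k = w * \prod_(y <- sk) y & (size sk < size t)%N].
Proof.
move=> Ht St Hq Et.
have k0 : k != 0.
  by apply: contraNneq (prod_irreducible_neq0 Ht); rewrite Et => ->; rewrite mul0r.
have [ku | ku] := boolP (k \is a GRing.unit).
  exists k, [::]; split; rewrite ?big_nil ?mulr1 //.
  case: t Ht Et {St} => [_ | //]; rewrite big_nil => E1.
  by move: (unitr1 R); rewrite E1 unitrM (negbTE (irreducible_nonunit Hq)) andbF.
have [sk [[Hsk Ek] _]] := factorization_nonunit Hat k0 ku.
exists 1, sk; split; rewrite ?mul1r ?unitr1 //.
apply: (IH (s := q :: sk) (u := 1)) => //; first exact/irreducible_seq_cons.
  exact: unitr1.
by rewrite big_cons Ek mul1r Et mulrC.
Qed.

(* An irreducible [q] shared by [a b] and [prod t1] is cancelled from both sides; since [a b] is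
   not an associate of [q], the left-hand side keeps at least one factor beyond [s]. *)
Lemma shared_irreducible_size_bound (a b : R) (s t1 t2 : seq R) :
  a \isn't a GRing.unit -> b \isn't a GRing.unit -> a * b != 0 ->
  irreducible_seq s -> irreducible_seq t1 -> irreducible_seq t2 ->
  (size t1 < n)%N -> (size t1 + size t2 <= n)%N ->
  a * b * \prod_(y <- s) y = \prod_(y <- t1) y * \prod_(y <- t2) y ->
  has_common_nonunit (a * b) (\prod_(y <- t1) y) ->
  (size s + 2 <= size t1 + size t2)%N.
Proof.
move=> au bu ab0 Hs Ht1 Ht2 St1 St E Hcommon.
have [q Hq [[v Ev] [k Ek]]] :=
  common_irreducible_divisor Hat Hcommon (prod_irreducible_neq0 Ht1).
have [w [sk [wu Hsk Ek' Ssk]]] := divide_out_irreducible Ht1 St1 Hq Ek.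
have v0 : v != 0 by apply: contraNneq ab0; rewrite Ev => ->; rewrite mul0r.
have vu : v \isn't a GRing.unit.
  apply/negP => vu; apply: (mul_nonunit_not_irreducible au bu).
  by rewrite Ev; apply: irreducible_unitMl.
have [sv [[Hsv Ev'] Ssv]] := factorization_nonunit Hat v0 vu.
have Ecancel : \prod_(y <- sv ++ s) y = w * \prod_(y <- sk ++ t2) y.
  apply: (mulIf (irreducible_neq0 Hq)).
  by rewrite !big_cat /= Ev' mulrAC -Ev E Ek Ek'; ring.
have := IH (proj2 (irreducible_seq_cat _ _) (conj Hsv Hs))
  (proj2 (irreducible_seq_cat _ _) (conj Hsk Ht2)) wu Ecancel.
rewrite !size_cat; lia.
Qed.

Lemma Z_property_size_le_step (s t : seq R) (u : R) :
  irreducible_seq s -> irreducible_seq t -> u \is a GRing.unit ->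
  \prod_(y <- s) y = u * \prod_(y <- t) y -> size t = n -> (size s <= n)%N.
Proof.
move=> Hs Ht uu E St; rewrite leqNgt; apply/negP => Ssn.
case: t Ht E St => [_ | q t Ht E St].
  rewrite big_nil mulr1 => E; move: Ssn.
  by rewrite (prod_irreducible_unit Hs) ?E.
have [Hq Ht'] := iffLR (irreducible_seq_cons q t) Ht.
case: s Hs E Ssn => [|p1 [|p2 s]] Hs E Ssn; rewrite -?St //= in Ssn.
have [Hp1 /irreducible_seq_cons [Hp2 Hs']] := iffLR (irreducible_seq_cons _ _) Hs.
rewrite !big_cons !mulrA in E.
have p1u := irreducible_nonunit Hp1; have p2u := irreducible_nonunit Hp2.
case: t Ht Ht' E St Ssn => [_ _ | q' t' Ht Ht' E St Ssn].
  rewrite big_nil mulr1 -mulrA => E _ _.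
  have p2su : p2 * \prod_(y <- s) y \isn't a GRing.unit by rewrite unitrM (negbTE p2u).
  apply: (mul_nonunit_not_irreducible p1u p2su).
  by rewrite E; apply: irreducible_unitMl.
set t := q' :: t' in Ht Ht' E St Ssn.
have s0 : s != [::] by case: (s) Ssn; rewrite /= -?St.
have Hc : nonzero_nonunit (\prod_(y <- s) y).
  split; first exact: prod_irreducible_neq0.
  by apply: contra s0 => /(prod_irreducible_unit Hs') ->.
have p10 := irreducible_neq0 Hp1; have p20 := irreducible_neq0 Hp2.
have [t1 [t2 [Hperm St1t Hcommon]]] :=
  Z_property_split (conj p10 p1u) (conj p20 p2u) Hc (irreducible_unitMl uu Hq) Ht' isT E.
have [Ht1 Ht2] : irreducible_seq t1 /\ irreducible_seq t2.
  apply/irreducible_seq_cat; apply: irreducible_seq_perm Hperm _.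
  exact/irreducible_seq_cons/(conj (irreducible_unitMl uu Hq)).
have E12 : p1 * p2 * \prod_(y <- s) y = \prod_(y <- t1) y * \prod_(y <- t2) y.
  by rewrite E -big_cat -(perm_big _ Hperm) [RHS]big_cons.
have S12 := perm_size Hperm; rewrite size_cat /= in S12 St.
have St1n : (size t1 < n)%N by rewrite -St ltnS.
have S12n : (size t1 + size t2 <= n)%N by rewrite -S12 St.
have := shared_irreducible_size_bound p1u p2u (mulf_neq0 p10 p20) Hs' Ht1 Ht2 St1n S12n E12.
by move=> /(_ Hcommon); rewrite /= in Ssn; lia.
Qed.

End SizeBound.

Lemma Z_property_size_le (n : nat) (s t : seq R) (u : R) :
  irreducible_seq s -> irreducible_seq t -> u \is a GRing.unit ->
  \prod_(y <- s) y = u * \prod_(y <- t) y -> (size t < n)%N -> (size s <= size t)%N.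
Proof.
elim: n s t u => [// | n IH] s t u Hs Ht uu E; rewrite ltnS leq_eqVlt.
case/orP => [/eqP St | St]; last exact: IH E St.
by rewrite St; apply: (Z_property_size_le_step IH Hs Ht uu E).
Qed.

Lemma Z_property_half_factorial : half_factorial R.
Proof.
split=> // x _ _ s t [Hs Es] [Ht Et].
have Est : \prod_(y <- s) y = 1 * \prod_(y <- t) y by rewrite mul1r Es Et.
have Ets : \prod_(y <- t) y = 1 * \prod_(y <- s) y by rewrite mul1r Es Et.
apply/eqP; rewrite eqn_leq.
by rewrite (Z_property_size_le Hs Ht (unitr1 R) Est (ltnSn _))
           (Z_property_size_le Ht Hs (unitr1 R) Ets (ltnSn _)).
Qed.

End ZPropertyHalfFactorial.

Theorem mainTheorem2 (R : idomainType) :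
  atomic R -> integrally_closed R -> condition_C R ->
  (half_factorial R <-> Z_property R).
Proof.
move=> Hat _ HC; split; first exact: half_factorial_Z_property.
exact: Z_property_half_factorial.
Qed.
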